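(* Let $k$ be an algebraically closed field, $\Lambda$ a connected locally bounded $k$-category, and $G$ a group of $k$-linear automorphisms of $\Lambda$ which acts freely on $[\mathrm{ind}\Lambda]$. Let $L$ be a line in $\Lambda$ and $B_L$ its associated $\Lambda$-module. If $B_L$ is weakly-$G$-periodic, then $G_{B_L}\cong\mathbb{Z}$.
   Context: A locally bounded $k$-category: endomorphism algebras local, distinct objects non-isomorphic, and for each object $x$, $\sum_y\dim_k\Lambda(x,y)<\infty$, $\sum_y\dim_k\Lambda(y,x)<\infty$. A $\Lambda$-module is a contravariant $k$-linear functor $\Lambda\to\mathrm{MOD}\,k$; $\mathrm{supp}M$ is the full subcategory of objects $x$ with $M(x)\neq0$. $[\mathrm{ind}\Lambda]$ is the set of isomorphism classes of finite dimensional indecomposable $\Lambda$-modules; for $g\in G$, ${}^gM=M\circ g^{-1}$; $G$ acts freely on $[\mathrm{ind}\Lambda]$ if ${}^gM\not\cong M$ for every indecomposable finite dimensional $M$ and $1\neq g\in G$ (this implies $G$ acts freely on the objects of $\Lambda$). A full subcategory $L$ is convex if each path in the ordinary quiver of $\Lambda$ with source and terminal in $L$ has all its points in $L$. A line is a convex full subcategory isomorphic to the path category of a linear quiver (of type $A_n$, $A_\infty$ or $A_\infty^\infty$). For a line $L$, $B_L$ is the $\Lambda$-module with $B_L(x)=k$ for $x\in L$, $B_L(\alpha)\neq0$ for every nonzero morphism $\alpha$ of $L$, and $B_L(x)=0$ for $x\notin L$. $G_M=\{g\in G\mid {}^gM\cong M\}$. A locally finite dimensional indecomposable $\Lambda$-module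 $Y$ (i.e. $\dim_kY(x)<\infty$ for all $x$) is weakly-$G$-periodic if $\mathrm{supp}Y$ is infinite and $(\mathrm{supp}Y)/G_Y$ is finite. *)

From HB Require Import structures.
From mathcomp Require Import all_boot all_order all_algebra.
From Stdlib Require List Relations.
Set Implicit Arguments.
Unset Strict Implicit.
Unset Printing Implicit Defensive.
Import Order.TTheory GRing.Theory Num.Theory.
Local Open Scope ring_scope.

Record kcat (k : fieldType) := KCat {
  Ob : Type;
  Hom : Ob -> Ob -> vectType k;
  idm : forall x, Hom x x;
  comp : forall x y z, Hom y z -> Hom x y -> Hom x z;
  comp_linl : forall x y z (a : k) (g g' : Hom y z) (f : Hom x y),
      comp (a *: g + g') f = a *: comp g f + comp g' f;
  comp_linr : forall x y z (a : k) (g : Hom y z) (f f' : Hom x y),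
      comp g (a *: f + f') = a *: comp g f + comp g f';
  compA : forall x y z w (h : Hom z w) (g : Hom y z) (f : Hom x y),
      comp h (comp g f) = comp (comp h g) f;
  comp1m : forall x y (f : Hom x y), comp (idm y) f = f;
  compm1 : forall x y (f : Hom x y), comp f (idm x) = f
}.
Arguments comp {k} _ {x y z}.
Arguments idm {k} _ _.
Arguments Hom {k} _ _ _.
Arguments Ob {k} _.

Section Cat.
Variables (k : fieldType) (C : kcat k).

Definition nontrivial (V : lmodType k) : Prop := exists v : V, v <> 0.

Definition invertible x y (f : Hom C x y) : Prop :=
  exists g : Hom C y x, comp C g f = idm C x /\ comp C f g = idm C y.

Definition local_end (x : Ob C) : Prop :=
  idm C x <> 0 /\
  forall f g : Hom C x x, ~ invertible f -> ~ invertible g -> ~ invertible (f + g).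

Definition locally_bounded : Prop :=
  (forall x, local_end x) /\
  (forall x y : Ob C, x <> y -> forall f : Hom C x y, ~ invertible f) /\
  (forall x, exists s : seq (Ob C),
      forall y, (nontrivial (Hom C x y) \/ nontrivial (Hom C y x)) -> List.In y s).

Definition hom_rel (x y : Ob C) : Prop :=
  nontrivial (Hom C x y) \/ nontrivial (Hom C y x).

Definition connected_cat : Prop :=
  forall x y : Ob C, Relation_Operators.clos_refl_trans (Ob C) hom_rel x y.

Definition rad x y (f : Hom C x y) : Prop :=
  forall g : Hom C y x, invertible (idm C x - comp C g f).

Definition rad2 x y (h : Hom C x y) : Prop :=
  exists (n : nat) (zs : 'I_n -> Ob C) (fs : forall i, Hom C x (zs i))
         (gs : forall i, Hom C (zs i) y),
    (forall i, rad (fs i) /\ rad (gs i)) /\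
    h = \sum_(i < n) comp C (gs i) (fs i).

(* arrows of the ordinary quiver: (rad / rad^2)(x,y) <> 0 *)
Definition quiver_arrow (x y : Ob C) : Prop :=
  exists h : Hom C x y, rad h /\ ~ rad2 h.

(* full subcategories are given by predicates on objects *)
Definition convex (L : Ob C -> Prop) : Prop :=
  forall (n : nat) (p : nat -> Ob C),
    (forall i, (i < n)%N -> quiver_arrow (p i) (p i.+1)) ->
    L (p 0%N) -> L (p n) -> forall i, (i <= n)%N -> L (p i).

(* vertex sets of linear quivers of type A_n (n >= 1), A_oo, A_oo^oo *)
Definition linear_vertex_set (I : int -> Prop) : Prop :=
  (exists n : nat, (0 < n)%N /\ forall i, I i <-> ((0 <= i) && (i < n%:Z))) \/
  (forall i, I i <-> (0 <= i)) \/
  (forall i, I i).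

(* in the linear quiver with orientation [o] (o t = true : t -> t+1,
   o t = false : t+1 -> t), there is a (unique) path from i to j *)
Definition lpath (o : int -> bool) (i j : int) : Prop :=
  ((i <= j) /\ forall t, i <= t -> t < j -> o t = true) \/
  ((j <= i) /\ forall t, j <= t -> t < i -> o t = false).

(* L is a line: a convex full subcategory isomorphic to the path category
   of a linear quiver.  The isomorphism sends the vertex i to phi i and the
   unique path i ~> j to e i j; it is a linear bijection on Hom spaces
   (Hom(phi i, phi j) = k e_ij if there is a path, 0 otherwise) and a
   functor (identities, composition of paths). *)
Definition is_line (L : Ob C -> Prop) : Prop :=
  convex L /\
  exists (I : int -> Prop) (phi : int -> Ob C) (o : int -> bool)
         (e : forall i j, Hom C (phi i) (phi j)),
    linear_vertex_set I /\
    (forall i j, I i -> I j -> phi i = phi j -> i = j) /\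
    (forall x, L x <-> exists i, I i /\ phi i = x) /\
    (forall i j, I i -> I j -> lpath o i j ->
        e i j <> 0 /\ forall f : Hom C (phi i) (phi j), exists a : k, f = a *: e i j) /\
    (forall i j, I i -> I j -> ~ lpath o i j ->
        forall f : Hom C (phi i) (phi j), f = 0) /\
    (forall i, I i -> e i i = idm C (phi i)) /\
    (forall i j l, I i -> I j -> I l -> lpath o i j -> lpath o j l ->
        comp C (e j l) (e i j) = e i l).

Record kfun := KFun {
  fob : Ob C -> Ob C;
  fhom : forall x y, Hom C x y -> Hom C (fob x) (fob y)
}.
Arguments fob _ _.
Arguments fhom _ {x y}.

Definition kfid : kfun := @KFun (fun x => x) (fun x y f => f).
Definition kfcomp (F F' : kfun) : kfun :=
  @KFun (fun x => fob F (fob F' x)) (fun x y f => fhom F (fhom F' f)).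

Definition is_kfunctor (F : kfun) : Prop :=
  (forall x y (a : k) (f g : Hom C x y),
      fhom F (a *: f + g) = a *: fhom F f + fhom F g) /\
  (forall x, fhom F (idm C x) = idm C (fob F x)) /\
  (forall x y z (g : Hom C y z) (f : Hom C x y),
      fhom F (comp C g f) = comp C (fhom F g) (fhom F f)).

Definition kfinverse (F F' : kfun) : Prop :=
  kfcomp F F' = kfid /\ kfcomp F' F = kfid.

Definition auto_group (G : kfun -> Prop) : Prop :=
  G kfid /\
  (forall F F', G F -> G F' -> G (kfcomp F F')) /\
  (forall F, G F -> exists F', G F' /\ kfinverse F F') /\
  (forall F, G F -> is_kfunctor F).

(* Modules: contravariant k-linear functors C -> MOD k                 *)
Record kmod := KMod {
  mob : Ob C -> lmodType k;
  mmap : forall x y, Hom C x y -> mob y -> mob x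
}.
Arguments mob _ _.
Arguments mmap _ {x y}.

Definition is_kmod (M : kmod) : Prop :=
  (forall x y (f : Hom C x y) (a : k) (u v : mob M y),
      mmap M f (a *: u + v) = a *: mmap M f u + mmap M f v) /\
  (forall x y (a : k) (f g : Hom C x y) (u : mob M y),
      mmap M (a *: f + g) u = a *: mmap M f u + mmap M g u) /\
  (forall x (u : mob M x), mmap M (idm C x) u = u) /\
  (forall x y z (g : Hom C y z) (f : Hom C x y) (u : mob M z),
      mmap M (comp C g f) u = mmap M f (mmap M g u)).

Definition fin_dim (V : lmodType k) : Prop :=
  exists s : seq V, forall v : V,
    exists c : 'I_(size s) -> k, v = \sum_(i < size s) c i *: s`_i.

Definition dim_one (V : lmodType k) : Prop :=
  exists v : V, v <> 0 /\ forall u : V, exists a : k, u = a *: v.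

Definition supp (M : kmod) (x : Ob C) : Prop := nontrivial (mob M x).

Definition locally_fin_dim (M : kmod) : Prop := forall x, fin_dim (mob M x).

Definition fin_dim_mod (M : kmod) : Prop :=
  locally_fin_dim M /\ exists s : seq (Ob C), forall x, supp M x -> List.In x s.

Definition is_natural (M N : kmod) (phi : forall x, mob M x -> mob N x) : Prop :=
  (forall x (a : k) (u v : mob M x), phi x (a *: u + v) = a *: phi x u + phi x v) /\
  (forall x y (f : Hom C x y) (u : mob M y), phi x (mmap M f u) = mmap N f (phi y u)).

Definition mod_iso (M N : kmod) : Prop :=
  exists phi : forall x, mob M x -> mob N x,
    is_natural phi /\ forall x, bijective (phi x).

Definition indecomposable (M : kmod) : Prop :=
  (exists x, supp M x) /\
  forall e : forall x, mob M x -> mob M x,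
    is_natural e -> (forall x u, e x (e x u) = e x u) ->
    (forall x u, e x u = 0) \/ (forall x u, e x u = u).

(* M o F ; for F = g^{-1} this is the module  ^g M = M o g^{-1} *)
Definition twist (M : kmod) (F : kfun) : kmod :=
  @KMod (fun x => mob M (fob F x)) (fun x y f => mmap M (fhom F f)).

Definition fixes_iso (M : kmod) (g : kfun) : Prop :=
  exists g', kfinverse g g' /\ mod_iso (twist M g') M.

Definition acts_freely (G : kfun -> Prop) : Prop :=
  forall M, is_kmod M -> fin_dim_mod M -> indecomposable M ->
    forall g, G g -> g <> kfid -> ~ fixes_iso M g.

Definition stab (G : kfun -> Prop) (M : kmod) (g : kfun) : Prop :=
  G g /\ fixes_iso M g.

Definition weakly_G_periodic (G : kfun -> Prop) (Y : kmod) : Prop :=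
  is_kmod Y /\ locally_fin_dim Y /\ indecomposable Y /\
  (~ exists s : seq (Ob C), forall x, supp Y x -> List.In x s) /\
  (exists s : seq (Ob C), forall x, supp Y x ->
      exists y, List.In y s /\ exists g, stab G Y g /\ fob g y = x).

Definition is_B_of_line (L : Ob C -> Prop) (B : kmod) : Prop :=
  is_kmod B /\
  (forall x, L x -> dim_one (mob B x)) /\
  (forall x, ~ L x -> forall u : mob B x, u = 0) /\
  (forall x y (a : Hom C x y), L x -> L y -> a <> 0 ->
      exists u : mob B y, mmap B a u <> 0).

Definition kfpow (h h' : kfun) (n : int) : kfun :=
  match n with
  | Posz m => iter m (kfcomp h) kfid
  | Negz m => iter m.+1 (kfcomp h') kfid
  end.

Definition iso_to_Z (H : kfun -> Prop) : Prop :=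
  exists h h', H h /\ kfinverse h h' /\
    (forall n m : int, kfpow h h' n = kfpow h h' m -> n = m) /\
    (forall n : int, H (kfpow h h' n)) /\
    (forall g, H g -> exists n : int, g = kfpow h h' n).

End Cat.

(* Every [g] in the stabiliser of [B_L] is a k-linear automorphism preserving
   the support [L] of [B_L], so it permutes the vertices of the linear quiver
   underlying [L] while preserving which Hom spaces vanish, i.e. it is an
   automorphism of that quiver.  If [g] fixes a vertex [x], it also fixes the
   simple module at [x] (an endomorphism of [x] acts on it by the scalar through
   which it acts on [B_L x]); freeness of the action then forces [g = 1].  For
   [A_oo] every quiver automorphism fixes the end vertex, so the stabiliser would
   be trivial, and for [A_n] the support would be finite: both contradict weak
   periodicity.  For [A_oo^oo] a reflection either fixes a vertex or reverses an
   arrow, so [g] is a translation; the translation amount embeds the stabiliser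
   into [Z] as a nontrivial subgroup, which is generated by its least positive
   element. *)

From Pilot Require Import Defs.
From HB Require Import structures.
From mathcomp Require Import all_boot all_order all_algebra zify.
From Stdlib Require Import Classical ClassicalEpsilon Wf_nat.
Set Implicit Arguments.
Unset Strict Implicit.
Unset Printing Implicit Defensive.
Import Order.TTheory GRing.Theory Num.Theory.
Local Open Scope ring_scope.

Lemma addr_self_eq0 (V : zmodType) (a : V) : a = a + a -> a = 0.
Proof. by move=> h; apply: (@addrI _ a); rewrite addr0 -h. Qed.

Lemma scalerIf (k : fieldType) (V : lmodType k) (w : V) :
  w != 0 -> injective ( *:%R^~ w : k -> V).
Proof.
move=> w0 a b /eqP; rewrite -subr_eq0 -scalerBl scaler_eq0 (negbTE w0) orbF.
by rewrite subr_eq0 => /eqP.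
Qed.

Section Functors.
Variables (k : fieldType) (C : kcat k).
Implicit Types F : kfun C.

Lemma comp0m x y z (f : Defs.Hom C x y) : Defs.comp C (0 : Defs.Hom C y z) f = 0.
Proof.
by apply: addr_self_eq0; have := comp_linl 1 (0 : Defs.Hom C y z) 0 f; rewrite !scale1r addr0.
Qed.

Lemma compm0 x y z (g : Defs.Hom C y z) : Defs.comp C g (0 : Defs.Hom C x y) = 0.
Proof.
by apply: addr_self_eq0; have := comp_linr 1 g (0 : Defs.Hom C x y) 0; rewrite !scale1r addr0.
Qed.

Lemma compZm x y z a (g : Defs.Hom C y z) (f : Defs.Hom C x y) :
  Defs.comp C (a *: g) f = a *: Defs.comp C g f.
Proof. by have := comp_linl a g 0 f; rewrite !addr0 comp0m addr0. Qed.

Lemma compmZ x y z a (g : Defs.Hom C y z) (f : Defs.Hom C x y) :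
  Defs.comp C g (a *: f) = a *: Defs.comp C g f.
Proof. by have := comp_linr a g f 0; rewrite !addr0 compm0 addr0. Qed.

Lemma invertibleZ x (a : k) : a != 0 -> invertible (a *: idm C x).
Proof.
move=> a0; exists (a^-1 *: idm C x).
by rewrite !compZm !compmZ !comp1m !scalerA mulVf // mulfV // scale1r.
Qed.

Lemma invertibleN x y (f : Defs.Hom C x y) : invertible (- f) -> invertible f.
Proof.
move=> [g [gf fg]]; exists (- g).
by rewrite -!scaleN1r ?compZm ?compmZ in gf fg *.
Qed.

Lemma local_end_scalar_uniq x (h : Defs.Hom C x x) (mu nu : k) : local_end x ->
  ~ invertible (h - mu *: idm C x) -> ~ invertible (h - nu *: idm C x) -> mu = nu.
Proof.
move=> [_ loc] hmu hnu; apply: NNPP => /eqP neq.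
apply: (loc _ _ hnu (fun h' => hmu (invertibleN h'))).
have -> : h - nu *: idm C x - (h - mu *: idm C x) = (mu - nu) *: idm C x.
  by rewrite opprB addrC addrA subrK scalerBl.
by apply: invertibleZ; rewrite subr_eq0.
Qed.

Lemma kfcomp1f F : kfcomp (kfid C) F = F.
Proof. by case: F. Qed.

Lemma kfcompf1 F : kfcomp F (kfid C) = F.
Proof. by case: F. Qed.

Lemma kfcompA F1 F2 F3 : kfcomp F1 (kfcomp F2 F3) = kfcomp (kfcomp F1 F2) F3.
Proof. by []. Qed.

Lemma kfinverse_uniq F F1 F2 : kfinverse F F1 -> kfinverse F F2 -> F1 = F2.
Proof. by move=> [_ h1] [h2 _]; rewrite -(kfcompf1 F1) -h2 kfcompA h1 kfcomp1f. Qed.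

Lemma kfinverse_sym F F' : kfinverse F F' -> kfinverse F' F.
Proof. by case. Qed.

Lemma kfid_fobK F F' : kfcomp F' F = kfid C -> cancel (fob F) (fob F').
Proof. by move=> h x; rewrite -[fob F' _]/(fob (kfcomp F' F) x) h. Qed.

(* Stated for an arbitrary [F = kfid C] so that it applies to [kfcomp F' F],
   whose action on morphisms changes their (dependent) type. *)
Lemma kfid_fhom F (P : forall x y, Defs.Hom C x y -> Prop) : F = kfid C ->
  forall x y (f : Defs.Hom C x y), P _ _ (fhom F f) -> P _ _ f.
Proof. by move=> ->. Qed.

Lemma kfunctor0 F x y : is_kfunctor F -> fhom F (0 : Defs.Hom C x y) = 0.
Proof.
by move=> [lin _]; apply: addr_self_eq0; have := lin x y 1 0 0; rewrite !scale1r addr0.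
Qed.

Lemma kfunctor_invertible F x y (f : Defs.Hom C x y) :
  is_kfunctor F -> invertible f -> invertible (fhom F f).
Proof.
move=> [_ [F1 FM]] [g [gf fg]].
by exists (fhom F g); rewrite -!FM gf fg !F1.
Qed.

Lemma kfunctor_nontrivial F F' x y : is_kfunctor F' -> kfcomp F' F = kfid C ->
  nontrivial (Defs.Hom C x y) -> nontrivial (Defs.Hom C (fob F x) (fob F y)).
Proof.
move=> hF' FK [f f0]; exists (fhom F f) => Ff0; apply: f0.
have := kfid_fhom (P := fun _ _ f => f = 0) FK (f := f); apply => /=.
by rewrite Ff0 kfunctor0.
Qed.

End Functors.

Notation mm M f := (@mmap _ _ M _ _ f).

Section Modules.
Variables (k : fieldType) (C : kcat k).
Implicit Types M N P : kmod C.

Lemma mmap0 M x y (f : Defs.Hom C x y) : is_kmod M -> mm M f 0 = 0.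
Proof.
by move=> [lin _]; apply: addr_self_eq0; have := lin x y f 1 0 0; rewrite !scale1r addr0.
Qed.

Lemma mmapZ M x y (f : Defs.Hom C x y) a u :
  is_kmod M -> mm M f (a *: u) = a *: mm M f u.
Proof.
by move=> hM; have [lin _] := hM; have := lin x y f a u 0; rewrite !addr0 mmap0 // addr0.
Qed.

Lemma mmap0f M x y (u : mob M y) : is_kmod M -> mm M (0 : Defs.Hom C x y) u = 0.
Proof.
by move=> [_ [lin _]]; apply: addr_self_eq0; have := lin x y 1 0 0 u; rewrite !scale1r addr0.
Qed.

Lemma natural0 M N (phi : forall x, mob M x -> mob N x) x :
  is_natural phi -> phi x 0 = 0.
Proof.
by move=> [lin _]; apply: addr_self_eq0; have := lin x 1 0 0; rewrite !scale1r addr0.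
Qed.

Lemma mod_iso_refl M : mod_iso M M.
Proof. by exists (fun x u => u); split; [split | move=> x; exists id]. Qed.

Lemma mod_iso_trans M N P : mod_iso M N -> mod_iso N P -> mod_iso M P.
Proof.
move=> [f [[fl fn] fb]] [g [[gl gn] gb]].
exists (fun x u => g x (f x u)); split; last by move=> x; apply: bij_comp.
by split=> [x a u v | x y h u]; rewrite ?fl ?gl ?fn ?gn.
Qed.

Lemma mod_iso_sym M N : mod_iso M N -> mod_iso N M.
Proof.
move=> [f [[fl fn] fb]].
have finv x : {g | cancel (f x) g /\ cancel g (f x)}.
  by apply: constructive_indefinite_description; case: (fb x) => g *; exists g.
pose g x := sval (finv x).
have fK x : cancel (f x) (g x) by case: (svalP (finv x)).
have gK x : cancel (g x) (f x) by case: (svalP (finv x)).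
exists g; split; last by move=> x; exists (f x).
split=> [x a u v | x y h u]; apply: (can_inj (fK x)); by rewrite ?fl ?fn !gK.
Qed.

Lemma mod_iso_twist M N (F : kfun C) : mod_iso M N -> mod_iso (twist M F) (twist N F).
Proof.
move=> [f [[fl fn] fb]]; exists (fun x u => f (fob F x) u).
by split; [split=> [x a u v | x y h u] /= | move=> x; apply: fb]; rewrite ?fl ?fn.
Qed.

Lemma mod_iso_twist_kfid M (F : kfun C) : F = kfid C -> mod_iso (twist M F) M.
Proof. by move=> ->; apply: mod_iso_refl. Qed.

Lemma mod_iso_supp M N x : mod_iso M N -> supp M x -> supp N x.
Proof.
move=> [f [fnat fb]] [u u0]; exists (f x u) => fu0; apply: u0.
by apply: (bij_inj (fb x)); rewrite fu0 (natural0 _ fnat).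
Qed.

Lemma fixes_iso_inverse M (g g' : kfun C) :
  kfinverse g g' -> mod_iso (twist M g') M -> mod_iso M (twist M g).
Proof.
move=> [_ g'g] iso; apply: mod_iso_sym; apply: mod_iso_trans (mod_iso_twist_kfid M g'g).
exact: mod_iso_sym (mod_iso_twist g iso).
Qed.

End Modules.

Section Stabilizer.
Variables (k : fieldType) (C : kcat k) (G : kfun C -> Prop) (M : kmod C).
Hypothesis G_auto : auto_group G.

Lemma stab_kfunctor g : stab G M g -> is_kfunctor g.
Proof. by case: G_auto => _ [_ [_ Gfun]] [Gg _]; apply: Gfun. Qed.

Lemma stab_id : stab G M (kfid C).
Proof.
case: G_auto => G1 _; split=> //; exists (kfid C); split; first by split.
exact: mod_iso_twist_kfid.
Qed.

Lemma stab_comp g1 g2 : stab G M g1 -> stab G M g2 -> stab G M (kfcomp g1 g2).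
Proof.
move=> [Gg1 [g1' [[g1K g1'K] iso1]]] [Gg2 [g2' [[g2K g2'K] iso2]]].
split; first by case: G_auto => _ [Gcomp _]; apply: Gcomp.
exists (kfcomp g2' g1'); split; last exact: mod_iso_trans (mod_iso_twist g1' iso2) iso1.
by split; rewrite -kfcompA ?(kfcompA g2) ?(kfcompA g1') ?g2K ?g1'K kfcomp1f.
Qed.

Lemma stab_inverse g : stab G M g -> exists g', stab G M g' /\ kfinverse g g'.
Proof.
move=> [Gg [g'' [g''inv iso]]].
have [_ [_ [Ginv _]]] := G_auto.
have [g' [Gg' g'inv]] := Ginv g Gg.
rewrite -(kfinverse_uniq g'inv g''inv) in iso.
exists g'; do !split=> //; exists g; split; first exact: kfinverse_sym.
exact: mod_iso_sym (fixes_iso_inverse g'inv iso).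
Qed.

Lemma stab_supp g x : stab G M g -> supp M x -> supp M (fob g x).
Proof.
move=> [_ [g' [g'inv iso]]] Mx; exact: (mod_iso_supp (fixes_iso_inverse g'inv iso) Mx).
Qed.

End Stabilizer.

Section ShortRows.
Variable k : fieldType.
Implicit Types (n : nat) (c : k).

Definition rowsum n (u : 'rV[k]_n) : k := \sum_i u 0 i.

Lemma row_nil n (u w : 'rV[k]_n) : n = 0%N -> u = w.
Proof. by move=> n0; apply/matrixP=> i j; have := ltn_ord j; rewrite {2}n0. Qed.

Lemma row_le1E n (u : 'rV[k]_n) : (n <= 1)%N -> u = const_mx (rowsum u).
Proof.
case: n u => [|[|//]] u _; first exact: row_nil.
by apply/matrixP=> i j; rewrite mxE /rowsum big_ord1 !ord1.
Qed.

Lemma row_le1_const_scaled n (u : 'rV[k]_n) :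
  (n <= 1)%N -> const_mx (n%:R * rowsum u) = u.
Proof. by case: n u => [|[|//]] u _; [exact: row_nil | rewrite mul1r -row_le1E]. Qed.

Lemma rowsum_const n c : rowsum (const_mx c : 'rV[k]_n) = n%:R * c.
Proof.
rewrite /rowsum (eq_bigr (fun=> c)) => [|i _]; last by rewrite mxE.
by rewrite sumr_const card_ord mulr_natl.
Qed.

Lemma rowsumD n a (u w : 'rV[k]_n) : rowsum (a *: u + w) = a * rowsum u + rowsum w.
Proof. by rewrite /rowsum mulr_sumr -big_split; apply: eq_bigr => i _; rewrite !mxE. Qed.

Lemma rowsum0 n : rowsum (0 : 'rV[k]_n) = 0.
Proof. by rewrite /rowsum big1 // => i _; rewrite mxE. Qed.

Lemma rowsumZ n a (u : 'rV[k]_n) : rowsum (a *: u) = a * rowsum u.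
Proof. by have := rowsumD a u 0; rewrite !addr0 rowsum0 addr0. Qed.

Lemma const_mxD n a c d :
  (const_mx (a * c + d) : 'rV[k]_n) = a *: const_mx c + const_mx d.
Proof. by apply/matrixP=> i j; rewrite !mxE. Qed.

Lemma const_mxZ1 n c : (const_mx c : 'rV[k]_n) = c *: const_mx 1.
Proof. by apply/matrixP=> i j; rewrite !mxE mulr1. Qed.

End ShortRows.

Section SimpleModule.
Variables (k : fieldType) (C : kcat k) (B : kmod C) (L : Ob C -> Prop).
Hypotheses (B_kmod : is_kmod B) (B_dim1 : forall x, L x -> dim_one (mob B x))
  (B_out : forall x, ~ L x -> forall u : mob B x, u = 0).

Definition basis_vec x : mob B x := epsilon (inhabits 0) (fun u => u <> 0).

(* For [x] in [L], [B x] is a line, so [B f] maps [basis_vec y] to a multiple of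
   [basis_vec x]; the scalar is junk when [x] is not in [L]. *)
Definition bcoef x y (f : Defs.Hom C x y) : k :=
  epsilon (inhabits 0) (fun a => mm B f (basis_vec y) = a *: basis_vec x).

Lemma basis_vec_neq0 x : L x -> basis_vec x != 0.
Proof.
move=> Lx; apply/eqP; apply: (epsilon_spec (inhabits 0) (fun u : mob B x => u <> 0)).
by case: (B_dim1 Lx) => w [w0 _]; exists w.
Qed.

Lemma basis_vec_span x (u : mob B x) : L x -> exists a, u = a *: basis_vec x.
Proof.
move=> Lx; have [w [_ wspan]] := B_dim1 Lx.
have [b bE] := wspan (basis_vec x); have [a aE] := wspan u.
have b0 : b != 0 by apply: contraNneq (basis_vec_neq0 Lx) => b0; rewrite bE b0 scale0r.
by exists (a / b); rewrite bE scalerA divfK.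
Qed.

Lemma bcoefP x y (f : Defs.Hom C x y) :
  L x -> mm B f (basis_vec y) = bcoef f *: basis_vec x.
Proof.
move=> Lx; apply: (epsilon_spec (inhabits 0) (fun a => mm B f _ = a *: _)).
exact: basis_vec_span.
Qed.

Lemma bcoef_eq x y (f : Defs.Hom C x y) a :
  L x -> mm B f (basis_vec y) = a *: basis_vec x -> bcoef f = a.
Proof. by move=> Lx fa; apply: (scalerIf (basis_vec_neq0 Lx)); rewrite /= -bcoefP. Qed.

Lemma bcoef_noninvertible x (f : Defs.Hom C x x) :
  L x -> ~ invertible (f - bcoef f *: idm C x).
Proof.
have [_ [Blin [B1 BM]]] := B_kmod.
move=> Lx [h [_ fh]]; move/eqP: (basis_vec_neq0 Lx); apply.
have fb0 : mm B (f - bcoef f *: idm C x) (basis_vec x) = 0.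
  by rewrite addrC -scaleNr Blin B1 bcoefP // scaleNr addNr.
by rewrite -[basis_vec x]B1 -fh BM fb0 mmap0.
Qed.

(* [bcoef f] is the unique scalar [a] with [f - a] non-invertible in the local
   ring [End x], and [g'] transports non-invertibility. *)
Lemma bcoef_fhom (g g' : kfun C) x (f : Defs.Hom C x x) :
  is_kfunctor g -> is_kfunctor g' -> kfcomp g g' = kfid C ->
  L x -> L (fob g' x) -> local_end (fob g' x) -> bcoef (fhom g' f) = bcoef f.
Proof.
move=> gfun [g'lin [g'1 _]] gg' Lx Lg'x loc.
apply: (local_end_scalar_uniq loc (bcoef_noninvertible Lg'x)) => inv.
apply: (bcoef_noninvertible Lx).
have := kfid_fhom (P := fun _ _ f => invertible f) gg' (f := f - bcoef f *: idm C x).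
apply => /=; apply: kfunctor_invertible => //.
by rewrite addrC -scaleNr g'lin g'1 scaleNr addrC.
Qed.

Variables (x0 : Ob C).
Hypotheses (L_x0 : L x0)
  (no_cycle : forall y (f : Defs.Hom C x0 y) (g : Defs.Hom C y x0),
     y <> x0 -> L y -> f = 0 \/ g = 0).

Definition simple_dim x : nat := if excluded_middle_informative (x = x0) then 1 else 0.

(* The simple module at [x0], encoded by rows of length [simple_dim x]:
   [k] at [x0], [0] elsewhere, and [f : x0 -> x0] acts by [bcoef f].  Composites
   through another vertex act by [0] since [L] has no cycle through [x0]. *)
Definition simple_mod : kmod C :=
  @KMod _ _ (fun x => 'rV[k]_(simple_dim x) : lmodType k)
    (fun x y f u => const_mx (bcoef f * rowsum u)).

Lemma simple_dim_le1 x : (simple_dim x <= 1)%N.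
Proof. by rewrite /simple_dim; case: excluded_middle_informative. Qed.

Lemma simple_dim_x0 : simple_dim x0 = 1%N.
Proof. by rewrite /simple_dim; case: excluded_middle_informative. Qed.

Lemma simple_dim_out x : x <> x0 -> simple_dim x = 0%N.
Proof. by rewrite /simple_dim; case: excluded_middle_informative. Qed.

Lemma simple_mod_out x (u w : mob simple_mod x) : x <> x0 -> u = w.
Proof. by move=> xx0; apply: row_nil; rewrite simple_dim_out. Qed.

Lemma bcoef_cycle y (f : Defs.Hom C x0 y) (g : Defs.Hom C y x0) :
  y <> x0 -> bcoef (Defs.comp C g f) = 0.
Proof.
have [_ [_ [_ BM]]] := B_kmod.
move=> yx0; apply: bcoef_eq => //; rewrite scale0r BM.
have [Ly|nLy] := classic (L y); last by rewrite (B_out nLy (mm B g _)) mmap0.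
by case: (no_cycle f g yx0 Ly) => ->; rewrite ?mmap0f ?mmap0.
Qed.

Lemma simple_mod_kmod : is_kmod simple_mod.
Proof.
have [_ [Blin [B1 BM]]] := B_kmod.
split=> [x y f a u w | ] /=.
  by rewrite rowsumD mulrDr mulrCA const_mxD.
split=> [x y a f g u | ] /=.
  have [? | xx0] := classic (x = x0); last exact: simple_mod_out.
  subst x.
  have -> : bcoef (a *: f + g) = a * bcoef f + bcoef g.
    by apply: bcoef_eq => //; rewrite Blin !bcoefP // scalerDl scalerA.
  by rewrite mulrDl -mulrA const_mxD.
split=> [x u | x y z g f u] /=.
  have [? | xx0] := classic (x = x0); last exact: simple_mod_out.
  subst x.
  rewrite (@bcoef_eq _ _ _ 1) ?B1 ?scale1r // mul1r.
  exact/esym/row_le1E/simple_dim_le1.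
have [? | xx0] := classic (x = x0); last exact: simple_mod_out.
have [? | zx0] := classic (z = x0); last first.
  by rewrite (simple_mod_out u 0 zx0) !(rowsum0, mulr0, rowsum_const).
subst x z; rewrite rowsum_const; have [? | yx0] := classic (y = x0); last first.
  by rewrite bcoef_cycle // (simple_dim_out yx0) !(mul0r, mulr0).
subst y.
rewrite [in _%:R]simple_dim_x0 mul1r mulrA; congr (const_mx (_ * _)).
by apply: bcoef_eq => //; rewrite BM bcoefP // mmapZ // bcoefP // scalerA mulrC.
Qed.

Lemma simple_mod_fin_dim : fin_dim_mod simple_mod.
Proof.
split=> [x | ].
  exists [:: const_mx 1] => u; exists (fun=> rowsum u).
  by rewrite big_ord1 /= -const_mxZ1; apply: row_le1E; apply: simple_dim_le1.
exists [:: x0] => x [u u0] /=; left.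
by apply: NNPP => xx0; apply: u0; apply: simple_mod_out => /esym.
Qed.

Lemma simple_mod_indecomposable : indecomposable simple_mod.
Proof.
split.
  exists x0, (const_mx 1) => /(congr1 (@rowsum _ _)).
  by rewrite rowsum_const rowsum0 simple_dim_x0 mulr1 => /eqP; rewrite oner_eq0.
move=> e enat eK; have [elin _] := enat.
have eE x (u : mob simple_mod x) : e x u = rowsum u *: e x (const_mx 1).
  rewrite {1}(row_le1E u (simple_dim_le1 x)) const_mxZ1 -[_ *: const_mx 1]addr0.
  by rewrite elin natural0 // addr0.
set c := rowsum (e x0 (const_mx 1)).
have ec : e x0 (const_mx 1) = const_mx c by apply: row_le1E; apply: simple_dim_le1.
have cc : c * c = c.
  have /(congr1 (@rowsum _ _)) := eK x0 (const_mx 1).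
  by rewrite ec eE ec rowsumZ !rowsum_const simple_dim_x0 !mul1r.
have /eqP : c * (c - 1) = 0 by rewrite mulrBr mulr1 cc subrr.
rewrite mulf_eq0 subr_eq0 => /orP [/eqP c0 | /eqP c1]; [left | right] => x u;
  (have [? | xx0] := classic (x = x0); last exact: simple_mod_out); subst x.
  by rewrite eE ec c0 const_mxZ1 scale0r scaler0.
by rewrite eE ec c1 -const_mxZ1; apply/esym/row_le1E/simple_dim_le1.
Qed.

Lemma simple_mod_twist (g g' : kfun C) :
  is_kfunctor g -> is_kfunctor g' -> kfinverse g g' -> local_end x0 ->
  fob g x0 = x0 -> mod_iso (twist simple_mod g') simple_mod.
Proof.
move=> gfun g'fun [gg' g'g] loc gx0.
have g'x0 : fob g' x0 = x0 by rewrite -[in LHS]gx0 (kfid_fobK g'g).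
have g'E x : (fob g' x = x0) <-> (x = x0).
  by split=> [g'x | -> //]; rewrite -(kfid_fobK gg' x) g'x gx0.
have dimg' x : simple_dim (fob g' x) = simple_dim x.
  have [xx0 | xx0] := classic (x = x0); first by rewrite !(simple_dim_x0, xx0, g'x0).
  by rewrite !simple_dim_out // => /g'E.
exists (fun x (u : 'rV[k]_(simple_dim (fob g' x))) => const_mx (rowsum u) : 'rV_(simple_dim x)).
split; last first.
  move=> x; exists (fun u : 'rV[k]_(simple_dim x) => const_mx (rowsum u)) => u;
  by rewrite rowsum_const ?dimg' -?(dimg' x) row_le1_const_scaled ?simple_dim_le1.
split=> [x a u w | x y f u] /=; first by rewrite rowsumD const_mxD.
rewrite !rowsum_const dimg'.
have [xx0 | xx0] := classic (x = x0); last exact: simple_mod_out.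
have [yx0 | yx0] := classic (y = x0); last first.
  by rewrite (row_nil u 0) ?rowsum0 ?mulr0 // dimg' simple_dim_out.
subst x y; rewrite mulrCA; congr (const_mx (_ * _)).
by apply: (bcoef_fhom (g := g)); rewrite ?g'x0.
Qed.

Lemma free_action_fixed_vertex (G : kfun C -> Prop) g :
  auto_group G -> acts_freely G -> local_end x0 -> G g -> fob g x0 = x0 -> g = kfid C.
Proof.
move=> [_ [_ [Ginv Gfun]]] free loc Gg gx0; apply: NNPP => g1.
have [g' [Gg' ginv]] := Ginv g Gg.
apply: (free _ simple_mod_kmod simple_mod_fin_dim simple_mod_indecomposable g Gg g1).
by exists g'; split=> //; apply: (simple_mod_twist (g := g)) => //; apply: Gfun.
Qed.

End SimpleModule.

Section LinearQuiver.
Variable o : int -> bool.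
Implicit Types (i j a b c : int) (I : int -> Prop).

Lemma lpath_antisym i j : lpath o i j -> lpath o j i -> i = j.
Proof.
move=> [[ij ijo] | [ji jio]] [[ji' jio'] | [ij' ijo']]; try lia.
  case: (ltP i j) => [lt | ]; last lia.
  by have := ijo i (lexx i) lt; rewrite ijo' ?lexx.
case: (ltP j i) => [lt | ]; last lia.
by have := jio j (lexx j) lt; rewrite jio' ?lexx.
Qed.

Lemma lpath_between a b c : lpath o a c -> lpath o c b -> (a <= c <= b) \/ (b <= c <= a).
Proof.
move=> [[ac aco] | [ca aco]] [[cb cbo] | [bc cbo]]; try by [left; lia | right; lia].
  case: (ltP a c) => ac'; last by right; lia.
  case: (ltP b c) => bc'; last by left; lia.
  by have := aco (c - 1) ltac:(lia) ltac:(lia); rewrite cbo //; lia.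
case: (ltP c a) => ca'; last by left; lia.
case: (ltP c b) => cb'; last by right; lia.
by have := aco c ltac:(lia) ltac:(lia); rewrite cbo //; lia.
Qed.

Lemma lpath_split a b c : lpath o a b -> (a <= c <= b) \/ (b <= c <= a) ->
  lpath o a c /\ lpath o c b.
Proof.
move=> [[ab abo] | [ba bao]] bet.
  by split; left; split=> [|t *]; try apply: abo; lia.
by split; right; split=> [|t *]; try apply: bao; lia.
Qed.

Lemma lpath_succ i : lpath o i (i + 1) \/ lpath o (i + 1) i.
Proof.
case oi: (o i); [left; left | right; right]; split=> [|t *]; try lia;
  by have -> : t = i by lia.
Qed.

Definition lcover I i j : Prop :=
  [/\ lpath o i j, i <> j & forall c, I c -> lpath o i c -> lpath o c j -> c = i \/ c = j].

Lemma lcover_succ I i : lcover I i (i + 1) \/ lcover I (i + 1) i.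
Proof.
have cover a b : `|a - b| = 1 -> lpath o a b -> lcover I a b.
  move=> ab1 abo; split=> // [|c _ ac cb]; first lia.
  by case: (lpath_between ac cb); lia.
by case: (lpath_succ i) => ?; [left | right]; apply: cover => //; lia.
Qed.

Lemma lcover_dist I i j : (forall a b c, I a -> I b -> a <= c <= b -> I c) ->
  I i -> I j -> lcover I i j -> j = i + 1 \/ j = i - 1.
Proof.
move=> Iconv Ii Ij [ij neq cover].
have far c : I c -> (i <= c <= j) \/ (j <= c <= i) -> c = i \/ c = j.
  by move=> Ic bet; have [ic cj] := lpath_split ij bet; apply: cover.
case: (ltP i j) => lt.
  by have := far (i + 1) (Iconv i j (i + 1) Ii Ij ltac:(lia)) ltac:(lia); lia.
by have := far (i - 1) (Iconv j i (i - 1) Ij Ii ltac:(lia)) ltac:(lia); lia.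
Qed.

Definition line_auto I (sg sg' : int -> int) : Prop :=
  [/\ forall i, I i -> I (sg i), forall i, I i -> I (sg' i),
      forall i, I i -> sg' (sg i) = i, forall i, I i -> sg (sg' i) = i
    & forall i j, I i -> I j -> lpath o (sg i) (sg j) <-> lpath o i j].

Lemma line_auto_inj I sg sg' i j :
  line_auto I sg sg' -> I i -> I j -> sg i = sg j -> i = j.
Proof. by case=> _ _ sgK _ _ Ii Ij eq; rewrite -(sgK i) // eq sgK. Qed.

Lemma line_auto_lcover I sg sg' i j : line_auto I sg sg' -> I i -> I j ->
  lcover I i j -> lcover I (sg i) (sg j).
Proof.
move=> auto Ii Ij [ij neq cover]; have [sgI sg'I _ sg'K sgpath] := auto.
split=> [|/(line_auto_inj auto Ii Ij) // | c Ic ic cj]; first by apply/sgpath.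
have Ic' := sg'I c Ic; rewrite -(sg'K c) // !sgpath // in ic cj *.
by case: (cover _ Ic' ic cj) => ->; [left | right].
Qed.

Lemma line_auto_step I sg sg' i :
  (forall a b c, I a -> I b -> a <= c <= b -> I c) -> line_auto I sg sg' ->
  I i -> I (i + 1) -> sg (i + 1) = sg i + 1 \/ sg (i + 1) = sg i - 1.
Proof.
move=> Iconv auto Ii Ii1; have [sgI _ _ _ _] := auto.
case: (lcover_succ I i) => /(line_auto_lcover auto) cov.
  by apply: lcover_dist (cov _ _) => //; apply: sgI.
by have := lcover_dist Iconv (sgI _ Ii1) (sgI _ Ii) (cov Ii1 Ii); lia.
Qed.

End LinearQuiver.

Definition unit_steps_from (m : int) (f : int -> int) : Prop :=
  forall i : int, m <= i -> f (i + 1) = f i + 1 \/ f (i + 1) = f i - 1.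

Definition injective_from (m : int) (f : int -> int) : Prop :=
  forall i j : int, m <= i -> m <= j -> f i = f j -> i = j.

Lemma unit_steps_up (f : int -> int) : unit_steps_from 0 f -> injective_from 0 f ->
  f 1 = f 0 + 1 -> forall n : nat, f n = f 0 + n.
Proof.
move=> f_step f_inj f1; suff up (n : nat) : f n = f 0 + n /\ f (n%:Z + 1) = f 0 + n + 1.
  by move=> n; case: (up n).
elim: n => [|n [fn fn1]]; first by split; rewrite ?addr0 ?add0r.
have -> : n.+1%:Z = n%:Z + 1 by lia.
split; first lia.
case: (f_step (n%:Z + 1) ltac:(lia)); rewrite fn1 => fn2; first lia.
by have := f_inj (n%:Z + 1 + 1) n ltac:(lia) ltac:(lia) ltac:(lia); lia.
Qed.

Lemma unit_steps_nat (f : int -> int) : unit_steps_from 0 f -> injective_from 0 f ->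
  (forall n : nat, f n = f 0 + n) \/ (forall n : nat, f n = f 0 - n%:Z).
Proof.
move=> f_step f_inj; case: (f_step 0 (lexx 0)); rewrite add0r => f1.
  by left; apply: unit_steps_up.
right=> n; suff: - f n = - f 0 + n%:Z by lia.
apply: (unit_steps_up (f := fun i => - f i)) => [i i0 | i j i0 j0 /oppr_inj | ] /=.
- by case: (f_step i i0) => ->; [right | left]; lia.
- exact: f_inj.
- by rewrite f1; lia.
Qed.

Lemma unit_steps_int (f : int -> int) :
  (forall i : int, f (i + 1) = f i + 1 \/ f (i + 1) = f i - 1) -> injective f ->
  (forall i, f i = f 0 + i) \/ (forall i, f i = f 0 - i).
Proof.
move=> f_step f_inj.
have f_nat := unit_steps_nat (fun i _ => f_step i) (fun i j _ _ => @f_inj i j).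
have f_neg : unit_steps_from 0 (fun i => f (- i)).
  by move=> i _ /=; case: (f_step (- (i + 1))); rewrite opprD subrK => ->; [right | left]; lia.
have f_neg_inj : injective_from 0 (fun i => f (- i)).
  by move=> i j _ _ /f_inj/oppr_inj.
have [up | down] := f_nat; have [up' | down'] := unit_steps_nat f_neg f_neg_inj.
- by have := up' 1%N; rewrite /= oppr0 -up => /f_inj; lia.
- left=> i; case: i => n; first exact: up.
  by rewrite NegzE (down' n.+1) /= oppr0.
- right=> i; case: i => n; first exact: down.
  by rewrite NegzE (up' n.+1) /= oppr0 opprK.
- by have := down' 1%N; rewrite /= oppr0 -down => /f_inj; lia.
Qed.

Lemma line_auto_nat o I sg sg' :
  (forall i, I i <-> 0 <= i) -> line_auto o I sg sg' -> sg 0 = 0.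
Proof.
move=> IE auto; have [sgI sg'I _ sg'K _] := auto.
have Iconv a b c : I a -> I b -> a <= c <= b -> I c by rewrite !IE; lia.
have sg_ge0 (i : int) : 0 <= i -> 0 <= sg i by move/IE/sgI/IE.
have I0 : I 0 by apply/IE.
have [up | down] := unit_steps_nat (f := sg)
  (fun i i0 => line_auto_step Iconv auto (proj2 (IE i) i0) (proj2 (IE (i + 1)) ltac:(lia)))
  (fun i j i0 j0 => line_auto_inj auto (proj2 (IE i) i0) (proj2 (IE j) j0)).
  have := sg'K 0 I0; have := proj1 (IE _) (sg'I 0 I0).
  case: (sg' 0) => n n0; last lia.
  by rewrite up; have := sg_ge0 0 (lexx 0); lia.
by have := down (absz (sg 0)).+1; have := sg_ge0 (absz (sg 0)).+1 ltac:(lia); lia.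
Qed.

Lemma line_auto_int o I sg sg' : (forall i, I i) -> line_auto o I sg sg' ->
  (exists i, sg i = i) \/ (exists t, forall i, sg i = i + t).
Proof.
move=> Iall auto; have [_ _ _ _ sgpath] := auto.
have [up | down] := unit_steps_int
  (fun i => line_auto_step (fun _ _ c _ _ _ => Iall c) auto (Iall i) (Iall _))
  (fun i j => line_auto_inj auto (Iall i) (Iall j)).
  by right; exists (sg 0) => i; rewrite up addrC.
have [m [even | odd]] : exists m : int, sg 0 = m + m \/ sg 0 = m + m + 1.
  by set c := sg 0; exists (c %/ 2)%Z; lia.
  by left; exists m; rewrite down even addrK.
(* A reflection without fixed vertex swaps [m] and [m + 1], reversing their arrow. *)
have [swap1 swap2] : sg m = m + 1 /\ sg (m + 1) = m.
  by rewrite (down m) (down (m + 1)) odd; lia.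
have rev i j : lpath o i j -> lpath o (sg i) (sg j) by move/(sgpath _ _ (Iall _) (Iall _)).
by case: (lpath_succ o m) => p; have := rev _ _ p;
  rewrite swap1 swap2 => /(lpath_antisym p); lia.
Qed.

Section LineIndex.
Variables (k : fieldType) (C : kcat k) (L : Ob C -> Prop) (I : int -> Prop)
  (phi : int -> Ob C) (o : int -> bool).
Hypotheses (phi_inj : forall i j, I i -> I j -> phi i = phi j -> i = j)
  (L_phi : forall x, L x <-> exists i, I i /\ phi i = x)
  (hom_lpath : forall i j, I i -> I j ->
     nontrivial (Defs.Hom C (phi i) (phi j)) <-> lpath o i j).

Definition line_index (F : kfun C) (i : int) : int :=
  epsilon (inhabits 0) (fun j => I j /\ phi j = fob F (phi i)).

Lemma line_indexP (F : kfun C) i : (forall x, L x -> L (fob F x)) -> I i ->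
  I (line_index F i) /\ phi (line_index F i) = fob F (phi i).
Proof.
move=> FL Ii; apply: (epsilon_spec (inhabits 0) (fun j => I j /\ _)).
by apply/L_phi/FL/L_phi; exists i.
Qed.

Lemma line_index_auto (g g' : kfun C) :
  is_kfunctor g -> is_kfunctor g' -> kfinverse g g' ->
  (forall x, L x -> L (fob g x)) -> (forall x, L x -> L (fob g' x)) ->
  line_auto o I (line_index g) (line_index g').
Proof.
move=> gfun g'fun [gg' g'g] gL g'L.
have sgI i : I i -> I (line_index g i) by case/(line_indexP gL).
have sgE i : I i -> phi (line_index g i) = fob g (phi i) by case/(line_indexP gL).
have sg'I i : I i -> I (line_index g' i) by case/(line_indexP g'L).
have sg'E i : I i -> phi (line_index g' i) = fob g' (phi i) by case/(line_indexP g'L).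
split=> // [i Ii | i Ii | i j Ii Ij].
- apply: phi_inj => //; first exact/sg'I/sgI.
  by rewrite (sg'E _ (sgI _ Ii)) (sgE _ Ii) (kfid_fobK g'g).
- apply: phi_inj => //; first exact/sgI/sg'I.
  by rewrite (sgE _ (sg'I _ Ii)) (sg'E _ Ii) (kfid_fobK gg').
split=> [/(hom_lpath (sgI _ Ii) (sgI _ Ij)) | /(hom_lpath Ii Ij)] nt.
  apply/(hom_lpath Ii Ij); rewrite (sgE _ Ii) (sgE _ Ij) in nt.
  by move/(kfunctor_nontrivial gfun gg'): nt; rewrite !(kfid_fobK g'g).
apply/(hom_lpath (sgI _ Ii) (sgI _ Ij)); rewrite (sgE _ Ii) (sgE _ Ij).
exact: kfunctor_nontrivial g'fun g'g nt.
Qed.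

End LineIndex.

Section TranslationSubgroup.
Variables (k : fieldType) (C : kcat k) (H : kfun C -> Prop) (T : kfun C -> int -> Prop).
Hypotheses (H_id : H (kfid C))
  (H_comp : forall g g', H g -> H g' -> H (kfcomp g g'))
  (H_inv : forall g, H g -> exists g', H g' /\ kfinverse g g')
  (T_total : forall g, H g -> exists t, T g t)
  (T_fun : forall g a b, T g a -> T g b -> a = b)
  (T_comp : forall g g' a b, T g a -> T g' b -> T (kfcomp g g') (a + b))
  (T_ker : forall g, H g -> T g 0 -> g = kfid C).

Lemma T_kfid : T (kfid C) 0.
Proof.
have [t Tt] := T_total H_id.
by have := T_fun (T_comp Tt Tt) Tt; rewrite -[RHS]addr0 => /addrI <-.
Qed.

Lemma T_inverse g g' t : H g' -> kfinverse g g' -> T g t -> T g' (- t).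
Proof.
move=> Hg' [gg' _] Tg; have [t' Tg'] := T_total Hg'.
have := T_fun (T_comp Tg Tg'); rewrite gg' => /(_ _ T_kfid) tt'.
by have -> : - t = t' by lia.
Qed.

Lemma iter_kfcomp_in g t : H g -> T g t ->
  forall m : nat, H (iter m (kfcomp g) (kfid C)) /\ T (iter m (kfcomp g) (kfid C)) (m%:Z * t).
Proof.
move=> Hg Tg; elim=> [|m [Hm Tm]] /=; first by rewrite mul0r; split=> //; apply: T_kfid.
split; first exact: H_comp.
by rewrite -addn1 PoszD mulrDl mul1r addrC; apply: T_comp.
Qed.

Lemma T_least_positive : (exists g, H g /\ g <> kfid C) ->
  exists h d, [/\ H h, T h d, 0 < d & forall g r, H g -> T g r -> 0 < r -> d <= r].
Proof.
move=> [g [Hg g1]]; pose P n := exists g, [/\ H g, T g (Posz n) & (0 < n)%N].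
have [t Tg] := T_total Hg.
have Pex : exists n, P n.
  have [t0 | t0] := ltP 0 t.
    by exists (absz t), g; split=> //; rewrite ?gez0_abs //; lia.
  have [g' [Hg' ginv]] := H_inv Hg.
  have [t_eq0 | t_neq0] := eqVneq t 0; first by case: g1; apply: T_ker; rewrite -?t_eq0.
  by exists (absz t), g'; split=> //; [rewrite lez0_abs // ; apply: T_inverse Tg | lia].
have [d [[[h [Hh Th d0]] dmin] _]] :=
  dec_inh_nat_subset_has_unique_least_element P (fun n => classic (P n)) Pex.
exists h, (Posz d); split=> // g' r Hg' Tr r0.
have /dmin : P (absz r) by exists g'; split=> //; [rewrite gez0_abs //; lia | lia].
lia.
Qed.

Section Generator.
Variables (h h' : kfun C) (d : int).
Hypotheses (Hh : H h) (Hh' : H h') (h_inv : kfinverse h h') (Th : T h d) (d_pos : 0 < d)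
  (d_min : forall g r, H g -> T g r -> 0 < r -> d <= r).

Lemma kfpow_in n : H (kfpow h h' n) /\ T (kfpow h h' n) (n * d).
Proof.
case: n => m /=; first exact: iter_kfcomp_in.
have [Hm Tm] := iter_kfcomp_in Hh' (T_inverse Hh' h_inv Th) m.+1.
by rewrite NegzE mulNr -mulrN.
Qed.

Lemma kfpow_inj : injective (kfpow h h').
Proof.
move=> n m nm; have [_ Tn] := kfpow_in n; have [_ Tm] := kfpow_in m.
rewrite nm in Tn; apply: (mulIf (lt0r_neq0 d_pos)); exact: T_fun Tn Tm.
Qed.

(* Division with remainder: [g * h^-q] translates by [t %% d], which the
   minimality of [d] forces to be [0]. *)
Lemma kfpow_surj g : H g -> exists n, g = kfpow h h' n.
Proof.
move=> Hg; have [t Tg] := T_total Hg.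
set q := (t %/ d)%Z; set r := (t %% d)%Z.
have [Hq Tq] := kfpow_in q; have [Hmq Tmq] := kfpow_in (- q).
have HX := H_comp Hg Hmq; have TX := T_comp Tg Tmq.
have rE : t + - q * d = r by rewrite (divz_eq t d) -/q -/r mulNr addrAC subrr add0r.
rewrite rE in TX.
have r0 : r = 0.
  have := modz_ge0 t (lt0r_neq0 d_pos); have := ltz_pmod t d_pos; rewrite -/r.
  have [r_pos | //] := ltP 0 r; first by have := d_min HX TX r_pos; lia.
  by move=> *; lia.
rewrite r0 in TX; exists q.
have qK : kfcomp (kfpow h h' (- q)) (kfpow h h' q) = kfid C.
  by apply: T_ker; [apply: H_comp | have := T_comp Tmq Tq; rewrite mulNr addNr].
by rewrite -[g]kfcompf1 -qK kfcompA (T_ker HX TX) kfcomp1f.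
Qed.

End Generator.

Lemma translation_subgroup_iso_Z : (exists g, H g /\ g <> kfid C) -> iso_to_Z H.
Proof.
move=> /T_least_positive [h [d [Hh Th d_pos d_min]]].
have [h' [Hh' h_inv]] := H_inv Hh.
exists h, h'; split=> //; split=> //; split; first exact: kfpow_inj Hh Hh' h_inv Th d_pos.
split=> [n | g Hg]; first by case: (kfpow_in Hh Hh' h_inv Th n).
exact: (kfpow_surj Hh Hh' h_inv Th d_pos d_min Hg).
Qed.

End TranslationSubgroup.

Section LineStabilizer.
Variables (k : fieldType) (C : kcat k) (G : kfun C -> Prop) (B : kmod C)
  (L : Ob C -> Prop) (I : int -> Prop) (phi : int -> Ob C) (o : int -> bool).
Hypotheses (G_auto : auto_group G) (G_free : acts_freely G)
  (C_local : forall x : Ob C, local_end x) (B_line : is_B_of_line L B)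
  (phi_inj : forall i j, I i -> I j -> phi i = phi j -> i = j)
  (L_phi : forall x, L x <-> exists i, I i /\ phi i = x)
  (hom_lpath : forall i j, I i -> I j ->
     nontrivial (Defs.Hom C (phi i) (phi j)) <-> lpath o i j).

Lemma B_supp x : supp B x <-> L x.
Proof.
have [_ [B_dim1 [B_out _]]] := B_line.
split=> [[u u0] | Lx]; last by have [w [w0 _]] := B_dim1 x Lx; exists w.
by apply: NNPP => nLx; apply: u0; apply: B_out.
Qed.

Lemma line_no_cycle i y (f : Defs.Hom C (phi i) y) (g : Defs.Hom C y (phi i)) :
  I i -> y <> phi i -> L y -> f = 0 \/ g = 0.
Proof.
move=> Ii yi /L_phi [j [Ij yj]]; subst y.
have [f0 | f0] := classic (f = 0); [by left | right].
apply: NNPP => g0; apply: yi; congr phi; apply: (@lpath_antisym o).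
  by apply/hom_lpath => //; exists g.
by apply/hom_lpath => //; exists f.
Qed.

Lemma fixed_vertex_kfid g i : G g -> I i -> fob g (phi i) = phi i -> g = kfid C.
Proof.
have [B_kmod [B_dim1 [B_out _]]] := B_line.
move=> Gg Ii gi; have Li : L (phi i) by apply/L_phi; exists i.
have no_cycle := fun y f h => @line_no_cycle i y f h Ii.
exact: (free_action_fixed_vertex B_kmod B_dim1 B_out Li no_cycle G_auto G_free (C_local _) Gg gi).
Qed.

Lemma stab_line_auto g : stab G B g ->
  exists sg sg', line_auto o I sg sg' /\ forall i, I i -> fob g (phi i) = phi (sg i).
Proof.
move=> Hg; have [g' [Hg' ginv]] := stab_inverse G_auto Hg.
have stabL h x : stab G B h -> L x -> L (fob h x).
  by move=> Hh /B_supp/(stab_supp Hh)/B_supp.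
exists (line_index I phi g), (line_index I phi g'); split.
  have [gfun g'fun] := (stab_kfunctor G_auto Hg, stab_kfunctor G_auto Hg').
  by apply: line_index_auto => // x; apply: stabL.
by move=> i Ii; have [_ ->] := line_indexP L_phi (fun x => stabL g x Hg) Ii.
Qed.

Lemma stab_nat_trivial g : (forall i, I i <-> 0 <= i) -> stab G B g -> g = kfid C.
Proof.
move=> IE Hg; have [sg [sg' [auto gE]]] := stab_line_auto Hg.
have I0 : I 0 by apply/IE.
by apply: (fixed_vertex_kfid (proj1 Hg) I0); rewrite (gE _ I0) (line_auto_nat IE auto).
Qed.

Lemma stab_int_translation g : (forall i, I i) -> stab G B g ->
  exists t, forall i, fob g (phi i) = phi (i + t).
Proof.
move=> Iall Hg; have [sg [sg' [auto gE]]] := stab_line_auto Hg.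
case: (line_auto_int Iall auto) => [[i sgi] | [t sgt]].
  have -> := fixed_vertex_kfid (proj1 Hg) (Iall i) (etrans (gE i (Iall i)) (congr1 phi sgi)).
  by exists 0 => j; rewrite addr0.
by exists t => i; rewrite gE ?sgt.
Qed.

Lemma stab_int_iso_Z : (forall i, I i) -> (exists g, stab G B g /\ g <> kfid C) ->
  iso_to_Z (stab G B).
Proof.
move=> Iall ntriv.
apply: (translation_subgroup_iso_Z (T := fun g t => forall i, fob g (phi i) = phi (i + t))) => //.
- exact: stab_id.
- by move=> g g'; apply: stab_comp.
- exact: stab_inverse.
- by move=> g; apply: stab_int_translation.
- by move=> g a b ga gb; have := ga 0; rewrite gb !add0r => /(phi_inj (Iall _) (Iall _)).
- by move=> g g' a b ga gb i /=; rewrite gb ga -addrA (addrC b).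
- move=> g Hg g0; apply: (fixed_vertex_kfid (proj1 Hg) (Iall 0)).
  by rewrite g0 addr0.
Qed.

End LineStabilizer.

Lemma is_lineP (k : fieldType) (C : kcat k) (L : Ob C -> Prop) : is_line L ->
  exists I phi o, [/\ linear_vertex_set I,
    forall i j, I i -> I j -> phi i = phi j -> i = j,
    forall x, L x <-> exists i, I i /\ phi i = x
  & forall i j, I i -> I j -> nontrivial (Defs.Hom C (phi i) (phi j)) <-> lpath o i j].
Proof.
move=> [_ [I [phi [o [e [IV [phi_inj [L_phi [path [nopath _]]]]]]]]]].
exists I, phi, o; split=> // i j Ii Ij; split=> [[f f0] | p].
  by apply: NNPP => np; apply/f0/nopath.
by exists (e i j); case: (path i j Ii Ij p).
Qed.

Lemma finite_line_support (k : fieldType) (C : kcat k) (L : Ob C -> Prop)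
    (I : int -> Prop) (phi : int -> Ob C) (n : nat) :
  (forall i, I i <-> (0 <= i) && (i < n%:Z)) ->
  (forall x, L x <-> exists i, I i /\ phi i = x) ->
  exists s, forall x, L x -> List.In x s.
Proof.
move=> IE L_phi; exists (List.map (fun m => phi (Posz m)) (List.seq 0 n)).
move=> x /L_phi [[m | m] [/IE Im <-]]; last lia.
by apply: List.in_map; apply/List.in_seq; lia.
Qed.

Lemma weakly_periodic_stab_nontrivial (k : fieldType) (C : kcat k)
    (G : kfun C -> Prop) (Y : kmod C) :
  weakly_G_periodic G Y -> exists g, stab G Y g /\ g <> kfid C.
Proof.
move=> [_ [_ [_ [Y_inf [s Ys]]]]]; apply: NNPP => triv; apply: Y_inf.
exists s => x /Ys [y [ys [g [Hg <-]]]].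
suff -> : g = kfid C by [].
by apply: NNPP => g1; apply: triv; exists g.
Qed.

Theorem lemma3p3 (k : closedFieldType) (C : kcat k)
  (G : kfun C -> Prop) (L : Ob C -> Prop) (B : kmod C) :
  locally_bounded C -> connected_cat C ->
  auto_group G -> acts_freely G ->
  is_line L -> is_B_of_line L B ->
  weakly_G_periodic G B ->
  iso_to_Z (stab G B).
Proof.
move=> [C_local _] _ G_auto G_free /is_lineP [I [phi [o [IV phi_inj L_phi hom_lpath]]]].
move=> B_line B_per; have ntriv := weakly_periodic_stab_nontrivial B_per.
case: IV => [[n [_ IE]] | [IE | Iall]].
- have [_ [_ [_ [B_inf _]]]] := B_per; case: B_inf.
  have [s Ls] := finite_line_support IE L_phi.
  by exists s => x /(B_supp B_line)/Ls.
- have [g [Hg g1]] := ntriv; case: g1.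
  exact: (stab_nat_trivial G_auto G_free C_local B_line phi_inj L_phi hom_lpath IE Hg).
exact: (stab_int_iso_Z G_auto G_free C_local B_line phi_inj L_phi hom_lpath Iall ntriv).
Qed.
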